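(* Let $g>0$, $\beta>0$, $\lambda\ge1$ an integer, and $0\le\mu_1\le\mu_2\le\cdots\le\mu_{2\lambda}\le1$. Then \[ -2g^2\coth(\tfrac{\beta}{2})+\frac{4g^2\cosh(\beta(1-\mu_{2\lambda}))}{\sinh\beta}+\xi_{2\lambda}(\boldsymbol{\mu}_{2\lambda},\beta)+\psi^-_{2\lambda}(\boldsymbol{\mu}_{2\lambda},\beta)\le 0, \] that is, $\Theta_{2\lambda}(g,\beta,\boldsymbol{\mu}_{2\lambda})\le 1$.
   Context: Fix $g>0$. For an integer $\lambda\ge1$, a vector $\boldsymbol{\mu}_\lambda=(\mu_1,\dots,\mu_\lambda)$ with $\mu_0:=0$, and $t>0$, define \[ \xi_\lambda(\boldsymbol{\mu}_\lambda,t)=-\frac{8g^2}{\sinh t}\sinh^2\!\big(\tfrac{t}{2}(1-\mu_\lambda)\big)(-1)^\lambda\sum_{\gamma=0}^{\lambda}(-1)^\gamma\cosh(t\mu_\gamma)-\frac{4g^2}{\sinh t}\sum_{\substack{0\le i<j\le\lambda-1\\ j-i\ \text{odd}}}\big(\cosh(t(1-\mu_{j+1}))-\cosh(t(1-\mu_j))\big)\big(\cosh(t\mu_i)-\cosh(t\mu_{i+1})\big), \] \[ \psi^-_\lambda(\boldsymbol{\mu}_\lambda,t)=\frac{4g^2}{\sinh t}\Big[\sum_{\gamma=0}^{\lambda}(-1)^\gamma\sinh\big(t(\tfrac12-\mu_\gamma)\big)\Big]^2, \] \[ \Theta_{2\lambda}(g,\beta,\boldsymbol{\mu}_{2\lambda})=\exp\Big(-2g^2\coth(\tfrac{\beta}{2})+\frac{4g^2\cosh(\beta(1-\mu_{2\lambda}))}{\sinh\beta}+\xi_{2\lambda}(\boldsymbol{\mu}_{2\lambda},\beta)+\psi^-_{2\lambda}(\boldsymbol{\mu}_{2\lambda},\beta)\Big).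 \] *)

From Stdlib Require Import Reals.
Open Scope R_scope.

Fixpoint fsum (n : nat) (f : nat -> R) : R :=
  match n with
  | O => 0
  | S k => fsum k f + f k
  end.

Definition coth (x : R) : R := cosh x / sinh x.

(* A vector mu_lambda = (mu_1,...,mu_lambda) is given as mu : nat -> R,
   read at indices 1..lambda; index 0 is forced to mu_0 := 0. *)
Definition mu0 (mu : nat -> R) (i : nat) : R :=
  match i with O => 0 | _ => mu i end.

Definition xi (g : R) (lam : nat) (mu : nat -> R) (t : R) : R :=
  let m := mu0 mu in
  - (8 * g ^ 2 / sinh t) * (sinh (t / 2 * (1 - m lam))) ^ 2 * (-1) ^ lam
    * fsum (S lam) (fun gam => (-1) ^ gam * cosh (t * m gam))
  - (4 * g ^ 2 / sinh t) *
    fsum lam (fun j => fsum j (fun i =>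
      if Nat.odd (j - i)
      then (cosh (t * (1 - m (S j))) - cosh (t * (1 - m j)))
           * (cosh (t * m i) - cosh (t * m (S i)))
      else 0)).

Definition psi_minus (g : R) (lam : nat) (mu : nat -> R) (t : R) : R :=
  let m := mu0 mu in
  4 * g ^ 2 / sinh t *
  (fsum (S lam) (fun gam => (-1) ^ gam * sinh (t * (1 / 2 - m gam)))) ^ 2.

Definition Theta_exponent (g beta : R) (lam : nat) (mu : nat -> R) : R :=
  - 2 * g ^ 2 * coth (beta / 2)
  + 4 * g ^ 2 * cosh (beta * (1 - mu0 mu (2 * lam))) / sinh beta
  + xi g (2 * lam) mu beta + psi_minus g (2 * lam) mu beta.

Definition Theta (g beta : R) (lam : nat) (mu : nat -> R) : R :=
  exp (Theta_exponent g beta lam mu).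

(* Put T = exp (beta/2) > 1 and e_i = exp (beta mu_i), so that e_0 = 1, e is
   nondecreasing and e_{2 lambda} <= T^2.  Every cosh / sinh in the exponent is
   then a Laurent expression in T and the e_i, and the exponent equals
   g^2 X(2 lambda), where X is [exponent_exp] below.  Writing
   D_j(f) = sum_{i<j, j-i odd} (f_i - f_{i+1}) for the "odd-gap differences"
   ([odd_diff]), the heart of the proof is the identity, valid for even n,
       X(n) (T - 1/T) = -2 Q(n),
       Q(n) = sum_{b<n} q_b(e_{b+1}) + q_n(T^2),
       q_b(c) = T (1/e_b - 1/c) (- D_b(e)) + (1/T) (c - e_b) D_b(1/e).
   It is proved by induction in steps of two: closed forms of D_j through
   alternating sums reduce the step to a rational identity ([defect_step]).
   Monotonicity of e gives D_b(e) <= 0 <= D_b(1/e), so every q_b is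
   nonnegative, Q(n) >= 0 and X(n) <= 0.  The file develops finite sums,
   alternating sums and odd-gap differences, then the identity and the sign of
   Q in exponential coordinates, then the translation of the hyperbolic
   functions, and finally the theorem. *)

From Stdlib Require Import Reals Lra Lia.
Open Scope R_scope.

Lemma fsum_S n f : fsum (S n) f = fsum n f + f n.
Proof. reflexivity. Qed.

Lemma fsum_ext n f g : (forall i, (i < n)%nat -> f i = g i) -> fsum n f = fsum n g.
Proof.
  induction n as [|n IH]; intros Hfg; simpl; [reflexivity|].
  rewrite IH, Hfg; auto.
Qed.

Lemma fsum_scal n a f : fsum n (fun i => a * f i) = a * fsum n f.
Proof. induction n as [|n IH]; simpl; [ring|]. rewrite IH; ring. Qed.

Lemma fsum_lin n a b f g :
  fsum n (fun i => a * f i + b * g i) = a * fsum n f + b * fsum n g.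
Proof. induction n as [|n IH]; simpl; [ring|]. rewrite IH; ring. Qed.

Lemma fsum_nonneg n f : (forall i, (i < n)%nat -> 0 <= f i) -> 0 <= fsum n f.
Proof.
  induction n as [|n IH]; intros Hf; simpl; [lra|].
  assert (0 <= fsum n f) by auto. assert (0 <= f n) by auto. lra.
Qed.

Lemma fsum_nonpos n f : (forall i, (i < n)%nat -> f i <= 0) -> fsum n f <= 0.
Proof.
  induction n as [|n IH]; intros Hf; simpl; [lra|].
  assert (fsum n f <= 0) by auto. assert (f n <= 0) by auto. lra.
Qed.

Definition alt (f : nat -> R) (n : nat) : R := fsum (S n) (fun i => (-1) ^ i * f i).

(* The odd-gap differences D_j(f) = sum over i < j with j - i odd of f_i - f_{i+1};
   this is the inner sum of xi. *)
Definition odd_diff (f : nat -> R) (j : nat) : R :=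
  fsum j (fun i => if Nat.odd (j - i) then f i - f (S i) else 0).

Lemma pow_m1_SS n : (-1) ^ S (S n) = (-1) ^ n.
Proof. simpl; ring. Qed.

Lemma alt_ext n f g : (forall i, f i = g i) -> alt f n = alt g n.
Proof. intros Hfg. unfold alt. apply fsum_ext; intros i _. rewrite Hfg. reflexivity. Qed.

Lemma alt_lin n a b f g :
  alt (fun i => a * f i + b * g i) n = a * alt f n + b * alt g n.
Proof. unfold alt. rewrite <- fsum_lin. apply fsum_ext; intros; ring. Qed.

Lemma alt_SS f n :
  alt f (S (S n)) = alt f n - (-1) ^ n * f (S n) + (-1) ^ n * f (S (S n)).
Proof. unfold alt. rewrite !fsum_S. cbn beta. rewrite <- !tech_pow_Rmult. ring. Qed.

(* Going from j to j+2 adds exactly one new odd gap, the one from j+1 to j+2. *)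
Lemma odd_diff_SS f j : odd_diff f (S (S j)) = odd_diff f j + (f (S j) - f (S (S j))).
Proof.
  unfold odd_diff. rewrite !fsum_S. cbn beta.
  replace (S (S j) - j)%nat with 2%nat by lia.
  replace (S (S j) - S j)%nat with 1%nat by lia.
  change (Nat.odd 2) with false; change (Nat.odd 1) with true.
  rewrite (fsum_ext j _ (fun i => if Nat.odd (j - i) then f i - f (S i) else 0)); [ring|].
  intros i Hi. replace (S (S j) - i)%nat with (S (S (j - i))) by lia. reflexivity.
Qed.

Lemma odd_diff_even f k : odd_diff f (2 * k) = f 0%nat - alt f (2 * k).
Proof.
  induction k as [|k IH]; [unfold odd_diff, alt; simpl; ring|].
  replace (2 * S k)%nat with (S (S (2 * k))) by lia.
  rewrite odd_diff_SS, alt_SS, IH, pow_1_even. ring.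
Qed.

Lemma odd_diff_odd f k : odd_diff f (S (2 * k)) = alt f (2 * k) - f (S (2 * k)).
Proof.
  induction k as [|k IH]; [unfold odd_diff, alt; simpl; ring|].
  replace (2 * S k)%nat with (S (S (2 * k))) by lia.
  rewrite odd_diff_SS, alt_SS, IH, pow_1_even. ring.
Qed.

Lemma odd_diff_scal j K f g :
  (forall i, g i = if Nat.odd (j - i) then K * (f i - f (S i)) else 0) ->
  fsum j g = K * odd_diff f j.
Proof.
  intros Hg. unfold odd_diff. rewrite <- fsum_scal. apply fsum_ext. intros i _.
  rewrite Hg. destruct (Nat.odd (j - i)); ring.
Qed.

Lemma odd_diff_nonneg f j : (forall i, (i < j)%nat -> f (S i) <= f i) -> 0 <= odd_diff f j.
Proof.
  intros Hf. apply fsum_nonneg. intros i Hi.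
  destruct (Nat.odd (j - i)); [specialize (Hf i Hi)|]; lra.
Qed.

Lemma odd_diff_nonpos f j : (forall i, (i < j)%nat -> f i <= f (S i)) -> odd_diff f j <= 0.
Proof.
  intros Hf. apply fsum_nonpos. intros i Hi.
  destruct (Nat.odd (j - i)); [specialize (Hf i Hi)|]; lra.
Qed.

Lemma denominators_nonzero T : 1 < T -> T <> 0 /\ (T * T) ^ 2 - 1 <> 0 /\ T * T - 1 <> 0.
Proof.
  intros HT. assert (HT2 : 1 < T * T) by nra.
  repeat split; apply Rgt_not_eq; simpl; nra.
Qed.

(* Exponential coordinates: T stands for exp (beta/2), e i for exp (beta mu_i). *)
Section ExpCoordinates.
Variable T : R.
Variable e : nat -> R.

(* cosh (beta mu_i), cosh (beta (1 - mu_i)), sinh (beta (1/2 - mu_i)), exp (- beta mu_i). *)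
Definition ch (i : nat) : R := (e i + / e i) / 2.
Definition chc (i : nat) : R := (T ^ 2 * / e i + e i / T ^ 2) / 2.
Definition shc (i : nat) : R := (T * / e i - e i / T) / 2.
Definition einv (i : nat) : R := / e i.

(* The exponent of Theta_n divided by g^2, in exponential coordinates. *)
Definition exponent_exp (n : nat) : R :=
  let sh := (T ^ 2 - / T ^ 2) / 2 in
  - 2 * ((T + / T) / (T - / T)) + 4 * chc n / sh
  - 8 / sh * ((chc n - 1) / 2) * (-1) ^ n * alt ch n
  - 4 / sh * fsum n (fun j => (chc (S j) - chc j) * odd_diff ch j)
  + 4 / sh * alt shc n ^ 2.

Definition qterm (b : nat) (c : R) : R :=
  T * (/ e b - / c) * (- odd_diff e b) + / T * (c - e b) * odd_diff einv b.

Definition qsum (n : nat) : R :=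
  fsum n (fun b => qterm b (e (S b))) + qterm n (T ^ 2).

Definition defect (n : nat) : R := exponent_exp n * (T - / T) + 2 * qsum n.

Lemma alt_ch n : alt ch n = (alt e n + alt einv n) / 2.
Proof.
  rewrite (alt_ext n ch (fun i => / 2 * e i + / 2 * einv i))
    by (intros; unfold ch, einv; unfold Rdiv; ring).
  rewrite alt_lin. unfold Rdiv; ring.
Qed.

Lemma alt_shc n : alt shc n = (T * alt einv n - alt e n / T) / 2.
Proof.
  rewrite (alt_ext n shc (fun i => (T / 2) * einv i + (- / T / 2) * e i))
    by (intros; unfold shc, einv; unfold Rdiv; ring).
  rewrite alt_lin. unfold Rdiv; ring.
Qed.

Hypothesis T_gt1 : 1 < T.
Hypothesis e_pos : forall i, 0 < e i.
Hypothesis e0_one : e 0%nat = 1.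

(* The defect is invariant under n -> n + 2 (n even): after the closed forms of
   D_j and of the alternating sums, this is a rational identity in T, the three
   new values of e, the two alternating sums of e and 1/e, and the sums A, B of
   the earlier terms. *)
Lemma defect_step k : defect (S (S (2 * k))) = defect (2 * k).
Proof.
  assert (He : forall i, e i <> 0) by (intros i; specialize (e_pos i); lra).
  unfold defect, exponent_exp, qsum. rewrite !fsum_S.
  set (A := fsum (2 * k) (fun j => (chc (S j) - chc j) * odd_diff ch j)).
  set (B := fsum (2 * k) (fun b => qterm b (e (S b)))).
  unfold qterm. rewrite !odd_diff_SS, !odd_diff_even, !odd_diff_odd, !alt_SS,
    !pow_m1_SS, pow_1_even, !alt_ch, !alt_shc.
  unfold ch, chc, shc, einv. rewrite e0_one.
  destruct (denominators_nonzero T T_gt1) as (HT0 & HT2 & HT1).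
  field. repeat split; auto.
Qed.

Lemma defect_base : defect 0 = 0.
Proof.
  destruct (denominators_nonzero T T_gt1) as (HT0 & HT2 & HT1).
  unfold defect, exponent_exp, qsum, qterm, odd_diff, alt, ch, chc, shc, einv.
  cbn [fsum]. rewrite pow_O, e0_one. field. auto.
Qed.

Lemma defect_zero k : defect (2 * k) = 0.
Proof.
  induction k as [|k IH]; [exact defect_base|].
  replace (2 * S k)%nat with (S (S (2 * k))) by lia.
  rewrite defect_step. exact IH.
Qed.

(* Each q_b(c) is nonnegative when e is nondecreasing up to b and e_b <= c:
   both factors of each product then have a definite sign. *)
Lemma qterm_nonneg b c :
  (forall i, (i < b)%nat -> e i <= e (S i)) -> e b <= c -> 0 <= qterm b c.
Proof.
  intros Hmono Hbc.
  assert (Hc : 0 < c) by (specialize (e_pos b); lra).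
  assert (Hinv : / c <= / e b) by (apply Rinv_le_contravar; auto).
  assert (HiT : 0 < / T) by (apply Rinv_0_lt_compat; lra).
  assert (De : odd_diff e b <= 0) by (apply odd_diff_nonpos; auto).
  assert (Dinv : 0 <= odd_diff einv b).
  { apply odd_diff_nonneg. intros i Hi. apply Rinv_le_contravar; auto. }
  unfold qterm.
  apply Rplus_le_le_0_compat; apply Rmult_le_pos; try apply Rmult_le_pos; lra.
Qed.

Lemma qsum_nonneg n :
  (forall i, (i < n)%nat -> e i <= e (S i)) -> e n <= T ^ 2 -> 0 <= qsum n.
Proof.
  intros Hmono Htop. unfold qsum.
  apply Rplus_le_le_0_compat; [apply fsum_nonneg; intros b Hb|];
    apply qterm_nonneg; auto; intros; apply Hmono; lia.
Qed.

Lemma exponent_exp_nonpos k :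
  (forall i, (i < 2 * k)%nat -> e i <= e (S i)) -> e (2 * k)%nat <= T ^ 2 ->
  exponent_exp (2 * k) <= 0.
Proof.
  intros Hmono Htop.
  assert (Hq := qsum_nonneg (2 * k) Hmono Htop).
  assert (Hd := defect_zero k). unfold defect in Hd.
  assert (HT : 0 < T - / T).
  { assert (/ T < 1) by (rewrite <- Rinv_1; apply Rinv_lt_contravar; lra). lra. }
  nra.
Qed.
End ExpCoordinates.

Lemma exp_le a b : a <= b -> exp a <= exp b.
Proof. intros [H | ->]; [left; apply exp_increasing; exact H | right; reflexivity]. Qed.

Lemma exp_gt1 x : 0 < x -> 1 < exp x.
Proof. intros Hx. rewrite <- exp_0. apply exp_increasing. exact Hx. Qed.

Lemma exp_half_sq t : exp t = exp (t / 2) ^ 2.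
Proof. simpl. rewrite Rmult_1_r, <- exp_plus. f_equal. field. Qed.

Lemma cosh_exp_form y : cosh y = (exp y + / exp y) / 2.
Proof. unfold cosh. rewrite exp_Ropp. reflexivity. Qed.

Lemma sinh_exp_form t : sinh t = (exp (t / 2) ^ 2 - / exp (t / 2) ^ 2) / 2.
Proof. unfold sinh. rewrite exp_Ropp, <- exp_half_sq. reflexivity. Qed.

Lemma cosh_compl_exp_form t x : cosh (t * (1 - x)) =
  (exp (t / 2) ^ 2 * / exp (t * x) + exp (t * x) / exp (t / 2) ^ 2) / 2.
Proof.
  unfold cosh. rewrite <- exp_half_sq.
  replace (t * (1 - x)) with (t + - (t * x)) by ring.
  replace (- (t + - (t * x))) with (t * x + - t) by ring.
  rewrite !exp_plus, !exp_Ropp. unfold Rdiv. ring.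
Qed.

Lemma sinh_half_exp_form t x : sinh (t * (1 / 2 - x)) =
  (exp (t / 2) * / exp (t * x) - exp (t * x) / exp (t / 2)) / 2.
Proof.
  unfold sinh.
  replace (t * (1 / 2 - x)) with (t / 2 + - (t * x)) by field.
  replace (- (t / 2 + - (t * x))) with (t * x + - (t / 2)) by ring.
  rewrite !exp_plus, !exp_Ropp. unfold Rdiv. ring.
Qed.

Lemma sinh_sq y : sinh y ^ 2 = (cosh (2 * y) - 1) / 2.
Proof.
  unfold sinh, cosh. replace (2 * y) with (y + y) by ring.
  replace (- (y + y)) with (- y + - y) by ring.
  rewrite !exp_plus, !exp_Ropp.
  assert (exp y <> 0) by (apply Rgt_not_eq, exp_pos). field. auto.
Qed.

Lemma coth_half_exp_form t : 0 < t ->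
  coth (t / 2) = (exp (t / 2) + / exp (t / 2)) / (exp (t / 2) - / exp (t / 2)).
Proof.
  intros Ht. assert (H1 : 1 < exp (t / 2)) by (apply exp_gt1; lra).
  unfold coth, cosh, sinh. rewrite exp_Ropp. field. split; nra.
Qed.

Lemma Theta_exponent_exp g t lam mu : 0 < t ->
  Theta_exponent g t lam mu
  = g ^ 2 * exponent_exp (exp (t / 2)) (fun i => exp (t * mu0 mu i)) (2 * lam).
Proof.
  intros Ht.
  set (T := exp (t / 2)). set (E := fun i => exp (t * mu0 mu i)). set (n := (2 * lam)%nat).
  assert (Hcosh : forall i, cosh (t * mu0 mu i) = ch E i)
    by (intros; apply cosh_exp_form).
  assert (Hcompl : forall i, cosh (t * (1 - mu0 mu i)) = chc T E i)
    by (intros; apply cosh_compl_exp_form).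
  assert (Hsinh : forall i, sinh (t * (1 / 2 - mu0 mu i)) = shc T E i)
    by (intros; apply sinh_half_exp_form).
  unfold Theta_exponent, xi, psi_minus. cbv zeta. fold n.
  rewrite (fsum_ext (S n) (fun gam => (-1) ^ gam * cosh (t * mu0 mu gam))
             (fun gam => (-1) ^ gam * ch E gam))
    by (intros; rewrite Hcosh; reflexivity).
  rewrite (fsum_ext (S n) (fun gam => (-1) ^ gam * sinh (t * (1 / 2 - mu0 mu gam)))
             (fun gam => (-1) ^ gam * shc T E gam))
    by (intros; rewrite Hsinh; reflexivity).
  rewrite (fsum_ext n _ (fun j => (chc T E (S j) - chc T E j) * odd_diff (ch E) j))
    by (intros j _; apply odd_diff_scal; intros i; rewrite !Hcompl, !Hcosh; reflexivity).
  fold (alt (ch E) n) (alt (shc T E) n).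
  rewrite sinh_sq.
  replace (2 * (t / 2 * (1 - mu0 mu n))) with (t * (1 - mu0 mu n)) by field.
  rewrite !Hcompl, sinh_exp_form, coth_half_exp_form by exact Ht. fold T.
  assert (HT : 1 < T) by (apply exp_gt1; lra).
  unfold exponent_exp. field. apply denominators_nonzero; exact HT.
Qed.

Theorem mainTheorem2 (g beta : R) (lam : nat) (mu : nat -> R) :
  0 < g -> 0 < beta -> (1 <= lam)%nat ->
  0 <= mu 1%nat ->
  (forall i : nat, (1 <= i)%nat -> (i < 2 * lam)%nat -> mu i <= mu (S i)) ->
  mu (2 * lam)%nat <= 1 ->
  Theta_exponent g beta lam mu <= 0 /\ Theta g beta lam mu <= 1.
Proof.
  intros _ Hbeta Hlam Hmu1 Hmono Htop.
  set (T := exp (beta / 2)). set (E := fun i => exp (beta * mu0 mu i)).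
  assert (HT : 1 < T) by (apply exp_gt1; lra).
  assert (HE : forall i, 0 < E i) by (intros; apply exp_pos).
  assert (HE0 : E 0%nat = 1) by (unfold E; simpl; rewrite Rmult_0_r; apply exp_0).
  assert (HEmono : forall i, (i < 2 * lam)%nat -> E i <= E (S i)).
  { intros [|i] Hi; unfold E; apply exp_le, Rmult_le_compat_l; simpl; try lra.
    apply Hmono; lia. }
  assert (HEtop : E (2 * lam)%nat <= T ^ 2).
  { unfold E, T. rewrite <- exp_half_sq. apply exp_le.
    destruct (2 * lam)%nat as [|m] eqn:Hm; [lia|]. simpl. nra. }
  assert (Hexp : Theta_exponent g beta lam mu <= 0).
  { rewrite Theta_exponent_exp by exact Hbeta.
    assert (0 <= g ^ 2) by nra.
    assert (exponent_exp T E (2 * lam) <= 0) by (apply exponent_exp_nonpos; auto).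
    fold T E. nra. }
  split; [exact Hexp|].
  unfold Theta. rewrite <- exp_0. exact (exp_le _ _ Hexp).
Qed.
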